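(* The hook subgroup $H_{\alpha_{12}}=X_{\alpha_3}X_{\alpha_5}X_{\alpha_6}X_{\alpha_7}X_{\alpha_8}X_{\alpha_9}X_{\alpha_{10}}X_{\alpha_{11}}X_{\alpha_{12}}$ is a normal subgroup of $U$ with $U/H_{\alpha_{12}}\cong(\mathbb{F}_q)^3$, and for each $s\in\mathbb{F}_q^\times$ the restriction $\mu_{\alpha_{12},s}|_{H_{\alpha_{12}}}$ is irreducible; the $q-1$ characters $\mu_{\alpha_{12},s}|_{H_{\alpha_{12}}}$, $s\in\mathbb{F}_q^\times$, are exactly the nonlinear irreducible characters of $H_{\alpha_{12}}$ (each of degree $q^4$). In particular every nonlinear irreducible character of $H_{\alpha_{12}}$ extends to $U$.
   Context: $q$ is a power of a prime $p$. $\Phi$ is a root system of type $D_4$ with simple roots $\alpha_1,\alpha_2,\alpha_3,\alpha_4$ ($\alpha_3$ central node), positive roots $\alpha_5=\alpha_1+\alpha_3$, $\alpha_6=\alpha_2+\alpha_3$, $\alpha_7=\alpha_3+\alpha_4$, $\alpha_8=\alpha_1+\alpha_2+\alpha_3$, $\alpha_9=\alpha_1+\alpha_3+\alpha_4$, $\alpha_{10}=\alpha_2+\alpha_3+\alpha_4$, $\alpha_{11}=\alpha_1+\alpha_2+\alpha_3+\alpha_4$, $\alpha_{12}=\alpha_1+\alpha_2+2\alpha_3+\alpha_4$. $U=U(q)$ is the Sylow $p$-subgroup of the Chevalley group $D_4(q)$ generated by $x_i(t)$ ($i=1,\dots,12$, $t\in\mathbb{F}_q$), with $x_i(t)x_i(u)=x_i(t+u)$,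 each element uniquely $x_1(d_1)\cdots x_{12}(d_{12})$, and commutators ($[a,b]=a^{-1}b^{-1}ab$): $[x_1(t),x_3(u)]=x_5(tu)$, $[x_1(t),x_6(u)]=x_8(-tu)$, $[x_1(t),x_7(u)]=x_9(tu)$, $[x_1(t),x_{10}(u)]=x_{11}(-tu)$, $[x_2(t),x_3(u)]=x_6(tu)$, $[x_2(t),x_5(u)]=x_8(-tu)$, $[x_2(t),x_7(u)]=x_{10}(tu)$, $[x_2(t),x_9(u)]=x_{11}(-tu)$, $[x_3(t),x_4(u)]=x_7(tu)$, $[x_3(t),x_{11}(u)]=x_{12}(-tu)$, $[x_4(t),x_5(u)]=x_9(-tu)$, $[x_4(t),x_6(u)]=x_{10}(-tu)$, $[x_4(t),x_8(u)]=x_{11}(-tu)$, $[x_5(t),x_{10}(u)]=x_{12}(-tu)$, $[x_6(t),x_9(u)]=x_{12}(-tu)$, $[x_7(t),x_8(u)]=x_{12}(tu)$, others trivial. $X_{\alpha_i}=\{x_i(t)\}$. Fix a nontrivial linear character $\phi$ of $(\mathbb{F}_q,+)$. Let $V=\prod_{i\in\{1,2,4,8,9,10,11,12\}}X_{\alpha_i}$ (a subgroup of $U$). For $s\in\mathbb{F}_q^\times$ let $\lambda_{\alpha_{12},s}$ be a linear character of $V$ with $\lambda_{\alpha_{12},s}(x_{12}(d))=\phi(sd)$ (such exists), and $\mu_{\alpha_{12},s}=\lambda_{\alpha_{12},s}^U$, the induced character. *)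

From HB Require Import structures.
From mathcomp Require Import all_boot all_order all_algebra all_fingroup all_solvable all_field all_character.
Set Implicit Arguments. Unset Strict Implicit. Unset Printing Implicit Defensive.
Import GRing.Theory Num.Theory.

Local Open Scope group_scope.

(* Commutator table of the positive root subgroups of D_4, for 1 <= i < j <= 12:
   d4comm i j = Some (k, neg) means [x_i(t), x_j(u)] = x_k(tu) (neg = false)
   or x_k(-tu) (neg = true); None means the commutator is trivial. *)
Definition d4comm (i j : nat) : option (nat * bool) :=
  match i, j with
  | 1, 3 => Some (5, false)
  | 1, 6 => Some (8, true)
  | 1, 7 => Some (9, false)
  | 1, 10 => Some (11, true)
  | 2, 3 => Some (6, false)
  | 2, 5 => Some (8, true)
  | 2, 7 => Some (10, false)
  | 2, 9 => Some (11, true)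
  | 3, 4 => Some (7, false)
  | 3, 11 => Some (12, true)
  | 4, 5 => Some (9, true)
  | 4, 6 => Some (10, true)
  | 4, 8 => Some (11, true)
  | 5, 10 => Some (12, true)
  | 6, 9 => Some (12, true)
  | 7, 8 => Some (12, false)
  | _, _ => None
  end.

Section D4.
Variables (F : finFieldType) (gT : finGroupType) (x : nat -> F -> gT).

Definition Xroot (i : nat) : {set gT} := [set x i t | t : F].

Definition d4prod (d : {ffun 'I_12 -> F}) : gT := \prod_(i < 12) x i.+1 (d i).

Definition Ud4 : {set gT} := <<\bigcup_(i < 12) Xroot i.+1>>.

Definition D4_relations : Prop :=
  [/\ (forall i t u, (1 <= i <= 12)%N -> x i t * x i u = x i (t + u)%R),
      (forall i j t u, (1 <= i)%N -> (i < j)%N -> (j <= 12)%N ->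
         [~ x i t, x j u] =
           match d4comm i j with
           | Some (k, neg) => x k (if neg then - (t * u) else t * u)%R
           | None => 1
           end),
      injective d4prod &
      (forall g, g \in Ud4 -> exists d, g = d4prod d)].

Definition Xprod (s : seq nat) : {set gT} := \prod_(i <- s) Xroot i.

Definition Vd4 : {set gT} := Xprod [:: 1; 2; 4; 8; 9; 10; 11; 12]%N.

Definition Hhook : {set gT} := Xprod [:: 3; 5; 6; 7; 8; 9; 10; 11; 12]%N.

End D4.

Definition nontriv_add_char (F : finFieldType) (phi : F -> algC) : Prop :=
  (forall a b, phi (a + b) = phi a * phi b)%R /\ exists a, phi a != 1%R.

(* The root subgroups X_3, X_5, ..., X_12 of the hook multiply to a group H of order q^9
   normalised by U, and X_1 X_2 X_4 maps isomorphically onto U/H.  All commutators in H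
   lie in the centre X_12 of U, and every root alpha_n of the hook other than alpha_12 has
   a partner with alpha_n + alpha_partner = alpha_12, so for h in H outside X_12 the
   commutators [h, x_partner(t)] run through all of X_12.  Hence Ind_V^U lambda_s,
   restricted to H, vanishes off X_12 and equals q^4 phi(s d) at x_12(d); its norm is
   q (q^4)^2 / q^9 = 1, so it is irreducible, and different s give different values on
   X_12.  Since |H : H'| >= q^8 and q^8 + (q - 1) (q^4)^2 = q^9 = |H|, the sum of the
   squared degrees leaves no room for further nonlinear irreducible characters of H. *)

From HB Require Import structures.
From mathcomp Require Import all_boot all_order all_algebra all_fingroup all_solvable all_field all_character.
From mathcomp Require Import ring.
Import Order.TTheory GRing.Theory Num.Theory.
Set Implicit Arguments. Unset Strict Implicit. Unset Printing Implicit Defensive.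

Section InducedLinearCentral.
Local Open Scope ring_scope.
Variables (gT : finGroupType) (G W : {group gT}) (lam : 'CF(W)).
Hypotheses (sWG : W \subset G) (lin_lam : lam \is a linear_char).

Lemma cfInd_mul_central g z : z \in W -> (z \in 'C(G))%g ->
  'Ind[G] lam (g * z)%g = lam z * 'Ind[G] lam g.
Proof.
move=> zW cGz; rewrite !cfIndE // mulrCA; congr (_ * _).
rewrite mulr_sumr; apply: eq_bigr => y yG.
rewrite conjMg [(z ^ y)%g]conjgE (centP cGz y yG) mulKg.
have [gyW | gy_notW] := boolP ((g ^ y)%g \in W); first by rewrite lin_charM // mulrC.
by rewrite (cfun0 _ gy_notW) mulr0 cfun0 // groupMr.
Qed.

Lemma cfInd_eq0_conj g y z : y \in G -> z \in W -> (z \in 'C(G))%g ->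
  (g ^ y = g * z)%g -> lam z != 1 -> 'Ind[G] lam g = 0.
Proof.
move=> yG zW cGz gyz lamz_neq1; have := cfunJ ('Ind[G] lam) g yG.
rewrite gyz cfInd_mul_central // => /(congr1 (fun v => v - 'Ind[G] lam g)).
rewrite subrr -{2}['Ind[G] lam g]mul1r -mulrBl => /eqP.
by rewrite mulf_eq0 subr_eq0 (negPf lamz_neq1) => /eqP.
Qed.

End InducedLinearCentral.

Section IrreducibleCriteria.
Variables (gT : finGroupType) (G : {group gT}).
Local Open Scope ring_scope.

Lemma flat_char_irr (Z : {set gT}) (chi : 'CF(G)) :
  chi \is a character -> chi \in 'CF(G, Z) -> {in Z, forall z, `|chi z| = chi 1%g} ->
  #|Z|%:R * chi 1%g ^+ 2 = #|G|%:R -> chi \in irr G.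
Proof.
move=> Nchi chiZ chi_flat cardZ; rewrite irrEchar Nchi (cfnormE chiZ).
rewrite (eq_bigr _ (fun z zZ => congr1 (fun v => v ^+ 2) (chi_flat z zZ))).
by rewrite sumr_const -[_ *+ #|Z|]mulr_natl cardZ mulVf ?neq0CG ?eqxx.
Qed.

(* The linear characters contribute [#|G : G'|] to [#|G| = \sum_i 'chi_i 1 ^+ 2], so a
   family of nonlinear characters making up the rest contains all of them. *)
Lemma nonlinear_irr_family (I : finType) (A : {pred I}) (mu : I -> 'CF(G)) :
    {in A, forall a, mu a \in irr G /\ ~~ (mu a \is a linear_char)} ->
    {in A &, injective mu} ->
    #|G|%:R <= #|G : G^`(1)|%g%:R + \sum_(a in A) mu a 1%g ^+ 2 ->
  forall chi, chi \in irr G -> ~~ (chi \is a linear_char) ->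
  exists2 a, a \in A & chi = mu a.
Proof.
move=> muA mu_inj le_G chi chi_irr chi_nl.
have [/exists_inP[a aA /eqP ->]|no_a] := boolP [exists a in A, chi == mu a].
  by exists a.
pose S := [set cfIirr (mu a) | a in A]; pose i0 := cfIirr chi.
have i0S : i0 \notin S.
  apply: contra no_a => /imsetP[a aA eq_i0]; apply/exists_inP; exists a => //.
  by rewrite -(cfIirrE chi_irr) -/i0 eq_i0 cfIirrE ?(muA a aA).1.
have nl_S i : i \in i0 |: S -> ~~ ('chi[G]_i \is a linear_char).
  case/setU1P => [->|/imsetP[a aA ->]]; first by rewrite cfIirrE.
  by rewrite cfIirrE; have [] := muA a aA.
have sumS : \sum_(i in S) 'chi[G]_i 1%g ^+ 2 = \sum_(a in A) mu a 1%g ^+ 2.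
  rewrite big_imset /=; first by apply: eq_bigr => a aA; rewrite cfIirrE ?(muA a aA).1.
  move=> a b aA bA /(congr1 (fun i => 'chi[G]_i)).
  by rewrite !cfIirrE ?(muA a aA).1 ?(muA b bA).1 // => /mu_inj; apply.
have sum_lin : \sum_(i | 'chi[G]_i \is a linear_char) 'chi[G]_i 1%g ^+ 2 = #|G : G^`(1)|%g%:R.
  rewrite -card_lin_irr -sum1_card natr_sum; apply: eq_bigr => i lin_i.
  by rewrite lin_char1 ?expr1n.
suff : #|G : G^`(1)|%g%:R + \sum_(a in A) mu a 1%g ^+ 2 < #|G|%:R.
  by move/lt_geF; rewrite le_G.
rewrite -irr_sum_square (bigID (fun i => 'chi[G]_i \is a linear_char)) /=.
rewrite sum_lin ltrD2l -sumS [X in _ < X](bigID (mem (i0 |: S))) /=.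
have -> : \sum_(i | ~~ ('chi[G]_i \is a linear_char) && (i \in i0 |: S)) 'chi[G]_i 1%g ^+ 2
    = \sum_(i in i0 |: S) 'chi[G]_i 1%g ^+ 2.
  by apply: eq_bigl => i; case: (boolP (i \in i0 |: S)) => [/nl_S ->|]; rewrite ?andbF.
rewrite (big_setU1 _ i0S) /= -addrA addrC ltr_pwDr ?exprn_gt0 ?irr1_gt0 // lerDl.
by rewrite sumr_ge0 // => i _; rewrite exprn_ge0 ?ltW ?irr1_gt0.
Qed.
End IrreducibleCriteria.

Section CommutatorProduct.
Variables (gT : finGroupType) (G : {group gT}).
Local Open Scope group_scope.

Lemma commg_prodl_central (I : eqType) (r : seq I) (y : I -> gT) (g : gT) :
  {in r, forall i, y i \in G /\ [~ y i, g] \in 'C(G)} ->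
  [~ \prod_(i <- r) y i, g] = \prod_(i <- r) [~ y i, g].
Proof.
elim: r => [|i r IH] yr; first by rewrite !big_nil comm1g.
have [yiG cent_yig] := yr i (mem_head i r).
have yr' : {in r, forall j, y j \in G /\ [~ y j, g] \in 'C(G)}.
  by move=> j jr; apply: yr; rewrite inE jr orbT.
have prodG : \prod_(j <- r) y j \in G.
  by rewrite big_seq group_prod // => j /yr'[].
by rewrite !big_cons commMgJ IH // conjgE (centP cent_yig) ?mulKg.
Qed.

End CommutatorProduct.

Section RootSubgroups.
Variables (F : finFieldType) (gT : finGroupType) (x : nat -> F -> gT).
Hypothesis Rel : D4_relations x.
Local Open Scope group_scope.

Definition root_comm i j (t u : F) : gT :=
  if d4comm i j is Some (k, neg) then x k (if neg then - (t * u) else t * u)%R else 1.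

(* [d4comm] is indexed by ordered pairs, hence the [minn]/[maxn]. *)
Definition comm_closed (s : seq nat) i j : bool :=
  if d4comm (minn i j) (maxn i j) is Some (k, _) then k \in s else true.

Definition sorted_roots (s : seq nat) : bool := [seq n <- iota 1 12 | n \in s] == s.

Lemma sorted_roots_range s n : sorted_roots s -> n \in s -> (0 < n <= 12)%N.
Proof. by move/eqP <-; rewrite mem_filter mem_iota => /andP[_]. Qed.

Lemma sorted_roots_uniq s : sorted_roots s -> uniq s.
Proof. by move/eqP <-; rewrite filter_uniq ?iota_uniq. Qed.

Lemma sorted_roots1 i : (0 < i <= 12)%N -> sorted_roots [:: i].
Proof.
move=> ir; apply/eqP; rewrite (@eq_filter _ _ (pred1 i)) => [|n]; last exact: mem_seq1.
by rewrite filter_pred1_uniq ?iota_uniq // mem_iota.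
Qed.

Lemma mulx i t u : (0 < i <= 12)%N -> x i t * x i u = x i (t + u)%R.
Proof. by case: Rel => xD _ _ _ /andP[i0 i12]; apply: xD; rewrite i0. Qed.

Lemma x0 i : (0 < i <= 12)%N -> x i 0%R = 1.
Proof. by move=> ir; apply: (@mulgI _ (x i 0%R)); rewrite mulg1 mulx ?addr0. Qed.

Lemma invx i t : (0 < i <= 12)%N -> (x i t)^-1 = x i (- t)%R.
Proof. by move=> ir; apply: (@mulgI _ (x i t)); rewrite mulgV mulx ?subrr ?x0. Qed.

Lemma commg_x i j t u : (0 < i <= 12)%N -> (0 < j <= 12)%N ->
  [~ x i t, x j u] =
    if (i < j)%N then root_comm i j t u
    else if (j < i)%N then (root_comm j i u t)^-1 else 1.
Proof.
case: Rel => _ xR _ _ /andP[i0 i12] /andP[j0 j12].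
case: ltngtP => [lt_ij|lt_ji|<-]; first exact: xR.
  by rewrite -invg_comm xR.
by apply/eqP/commgP; rewrite /commute !mulx ?i0 // addrC.
Qed.

Lemma d4prod_inj : injective (d4prod x).
Proof. by case: Rel. Qed.

Lemma Xroot_group i : (0 < i <= 12)%N -> group_set (Xroot x i).
Proof.
move=> ir; apply/group_setP; split; first by apply/imsetP; exists 0%R; rewrite ?x0.
by move=> _ _ /imsetP[t _ ->] /imsetP[u _ ->]; rewrite mulx //; apply: imset_f.
Qed.

Lemma mem_Xroot i t : x i t \in Xroot x i.
Proof. exact: imset_f. Qed.

Lemma Xprod_nil : Xprod x [::] = 1.
Proof. by rewrite /Xprod big_nil. Qed.

Lemma Xprod_cons i s : Xprod x (i :: s) = Xroot x i * Xprod x s.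
Proof. by rewrite /Xprod big_cons. Qed.

Lemma Xprod1 i : Xprod x [:: i] = Xroot x i.
Proof. by rewrite Xprod_cons Xprod_nil mulg1. Qed.

Lemma prod_mem_Xprod s f : \prod_(n <- s) x n (f n) \in Xprod x s.
Proof.
elim: s => [|i s IH]; first by rewrite big_nil Xprod_nil set11.
by rewrite big_cons Xprod_cons mem_mulg ?mem_Xroot.
Qed.

Lemma mem_XprodP s g : uniq s -> g \in Xprod x s ->
  exists f : nat -> F, g = \prod_(n <- s) x n (f n).
Proof.
elim: s g => [|i s IH] g.
  by rewrite Xprod_nil => _ /set1P ->; exists (fun=> 0%R); rewrite big_nil.
rewrite Xprod_cons /= => /andP[i_s s_uniq].
case/mulsgP=> _ h /imsetP[t _ ->] /(IH _ s_uniq)[f ->] ->.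
exists (fun n => if n == i then t else f n); rewrite big_cons eqxx; congr (_ * _).
by apply: eq_big_seq => n n_s; case: eqP => // eq_ni; rewrite -eq_ni n_s in i_s.
Qed.

Lemma one_Xprod s : {in s, forall n, 0 < n <= 12}%N -> 1 \in Xprod x s.
Proof.
move=> s_r; have := prod_mem_Xprod s (fun=> 0%R).
by rewrite big1_seq // => n /andP[_ /s_r/x0].
Qed.

Lemma x_mem_Xprod s k t : {in s, forall n, 0 < n <= 12}%N -> k \in s -> x k t \in Xprod x s.
Proof.
elim: s => // i s IH s_r; have s'_r : {in s, forall n, 0 < n <= 12}%N.
  by move=> n n_s; apply: s_r; rewrite inE n_s orbT.
rewrite Xprod_cons inE => /predU1P[->|k_s].
  by rewrite -[x i t]mulg1 mem_mulg ?mem_Xroot ?one_Xprod.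
by rewrite -[x k t]mul1g mem_mulg ?IH // -(x0 (s_r i (mem_head i s))) mem_Xroot.
Qed.

Lemma commg_x_mem s i j t u : {in s, forall n, 0 < n <= 12}%N ->
  (0 < i <= 12)%N -> (0 < j <= 12)%N -> comm_closed s i j ->
  [~ x i t, x j u] \in Xprod x s.
Proof.
move=> s_r ir jr; rewrite commg_x // /comm_closed /root_comm.
case: ltngtP => [lt_ij|lt_ji|_]; last by rewrite one_Xprod.
  by case: d4comm => [[k neg] k_s|_]; rewrite ?x_mem_Xprod ?one_Xprod.
by case: d4comm => [[k neg] k_s|_]; rewrite ?invx ?x_mem_Xprod ?invg1 ?one_Xprod ?s_r.
Qed.

Lemma commute_x i j t u : (0 < i <= 12)%N -> (0 < j <= 12)%N ->
  comm_closed [::] i j -> commute (x i t) (x j u).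
Proof.
move=> ir jr closed; apply/commgP.
have nil_r : {in [::], forall n, 0 < n <= 12}%N by [].
by have := commg_x_mem t u nil_r ir jr closed; rewrite Xprod_nil => /set1P ->.
Qed.

Lemma prod_x_d4prod s f : sorted_roots s ->
  \prod_(n <- s) x n (f n) = d4prod x [ffun j : 'I_12 => if j.+1 \in s then f j.+1 else 0%R].
Proof.
move=> /eqP sorted_s; rewrite /d4prod.
rewrite (eq_bigr (fun j : 'I_12 => if j.+1 \in s then x j.+1 (f j.+1) else 1)); last first.
  by move=> j _; rewrite ffunE; case: ifP => // _; rewrite x0 //= ltn_ord.
rewrite -big_mkcond -(big_mkord (fun j => j.+1 \in s) (fun j => x j.+1 (f j.+1))).
rewrite -(big_add1 _ _ _ 13 (fun n => n \in s) (fun n => x n (f n))) /=.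
by rewrite -{1}sorted_s big_filter.
Qed.

(* Coordinates are read off the unique normal form [x_1(d_1) ... x_12(d_12)]. *)
Lemma prod_x_inj s1 s2 f1 f2 : sorted_roots s1 -> sorted_roots s2 ->
  \prod_(n <- s1) x n (f1 n) = \prod_(n <- s2) x n (f2 n) ->
  forall n, (if n \in s1 then f1 n else 0%R) = (if n \in s2 then f2 n else 0%R).
Proof.
move=> sorted1 sorted2; rewrite !prod_x_d4prod // => /d4prod_inj eq_f n.
have [/andP[n0 n12]|n_r] := boolP (0 < n <= 12)%N.
  have n_ord : (n.-1 < 12)%N by rewrite prednK.
  have := congr1 (fun d : {ffun 'I_12 -> F} => d (Ordinal n_ord)) eq_f.
  by rewrite !ffunE /= prednK.
by rewrite !ifN //; apply: contra n_r; apply: sorted_roots_range.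
Qed.

Lemma x_inj i : (0 < i <= 12)%N -> injective (x i).
Proof.
move=> ir t u eq_tu; have sorted_i := sorted_roots1 ir.
have := @prod_x_inj _ _ (fun=> t) (fun=> u) sorted_i sorted_i _ i.
by rewrite !big_seq1 mem_seq1 eqxx; apply.
Qed.

Lemma card_Xroot i : (0 < i <= 12)%N -> #|Xroot x i| = #|F|.
Proof. by move=> ir; rewrite card_imset //; apply: x_inj. Qed.

Lemma x_Xprod_eq0 i s t : sorted_roots (i :: s) -> x i t \in Xprod x s -> t = 0%R.
Proof.
move=> sorted_is; have /andP[i_s s_uniq] := sorted_roots_uniq sorted_is.
have ir := sorted_roots_range sorted_is (mem_head i s).
case/(mem_XprodP s_uniq) => f eq_tf.
have := @prod_x_inj _ _ (fun=> t) (fun n => if n == i then 0%R else f n)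
  (sorted_roots1 ir) sorted_is.
rewrite big_seq1 big_cons eqxx x0 // mul1g => /(_ _ i).
rewrite mem_seq1 mem_head !eqxx; apply.
by rewrite eq_tf; apply: eq_big_seq => n n_s; case: eqP => // eq_ni; rewrite -eq_ni n_s in i_s.
Qed.

Lemma x_norm_Xprod s i t : group_set (Xprod x s) -> sorted_roots s ->
  (0 < i <= 12)%N -> all (comm_closed s i) s -> x i t \in 'N(Xprod x s).
Proof.
move=> gB sorted_s ir closed; pose B := Group gB; have s_r := sorted_roots_range sorted_s.
rewrite inE; apply/subsetP => _ /imsetP[_ /(mem_XprodP (sorted_roots_uniq sorted_s))[f ->] ->].
rewrite conjg_prod big_seq; apply: (@group_prod _ B) => n n_s.
rewrite conjg_mulR groupM ?x_mem_Xprod ?(commg_x_mem _ _ s_r (s_r n n_s) ir) //.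
by have := allP closed n n_s; rewrite /comm_closed minnC maxnC.
Qed.

(* Each head root group normalises the product of the later ones, which contains all the
   commutators it produces; by induction [Xprod s] is a group of order [q ^ size s]. *)
Fixpoint root_chain (s : seq nat) : bool :=
  if s is i :: s' then [&& sorted_roots s, all (comm_closed s' i) s' & root_chain s']
  else true.

Lemma root_chain_sorted s : root_chain s -> sorted_roots s.
Proof. by case: s => [|i s] // /and3P[]. Qed.

Lemma Xprod_chain s : root_chain s ->
  group_set (Xprod x s) /\ #|Xprod x s| = (#|F| ^ size s)%N.
Proof.
elim: s => [|i s IH]; first by rewrite Xprod_nil groupP cards1.
move=> /= /and3P[sorted_is closed /[dup] /root_chain_sorted sorted_s /IH[gB cardB]].
have ir := sorted_roots_range sorted_is (mem_head i s).
pose X := Group (Xroot_group ir); pose B := Group gB.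
have nBX : X \subset 'N(B).
  by apply/subsetP => _ /imsetP[t _ ->]; apply: x_norm_Xprod.
have tiXB : X :&: B = 1.
  apply/trivgP/subsetP => _ /setIP[/imsetP[t _ ->] /(x_Xprod_eq0 sorted_is) ->].
  by rewrite x0 ?set11.
rewrite Xprod_cons; split; first exact: (introT (@comm_group_setP _ X B) (normC nBX)).
by rewrite (TI_cardMg tiXB) /= card_Xroot // cardB expnS.
Qed.

Definition hook_roots := [:: 3; 5; 6; 7; 8; 9; 10; 11; 12]%N.
Definition hook_core := [:: 3; 5; 6; 7; 8; 9; 10; 11]%N.
Definition V_roots := [:: 1; 2; 4; 8; 9; 10; 11; 12]%N.

Lemma group_Hhook : group_set (Hhook x).
Proof. by have [] := @Xprod_chain hook_roots erefl. Qed.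

Lemma card_Hhook : #|Hhook x| = (#|F| ^ 9)%N.
Proof. by have [] := @Xprod_chain hook_roots erefl. Qed.

Lemma group_Vd4 : group_set (Vd4 x).
Proof. by have [] := @Xprod_chain V_roots erefl. Qed.

Lemma card_Vd4 : #|Vd4 x| = (#|F| ^ 8)%N.
Proof. by have [] := @Xprod_chain V_roots erefl. Qed.

Lemma Xprod_subG s (G : {group gT}) :
  {in s, forall n, Xroot x n \subset G} -> Xprod x s \subset G.
Proof.
elim: s => [|i s IH] sub_sG; first by rewrite Xprod_nil sub1G.
rewrite Xprod_cons mul_subG ?sub_sG ?mem_head // IH // => n n_s.
by apply: sub_sG; rewrite inE n_s orbT.
Qed.

Lemma Xroot_sub_Ud4 i : (0 < i <= 12)%N -> Xroot x i \subset Ud4 x.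
Proof.
case/andP=> i0 i12; have i_ord : (i.-1 < 12)%N by rewrite prednK.
by apply: sub_gen; apply: (bigcup_max (Ordinal i_ord)) => //=; rewrite prednK.
Qed.

Lemma x_in_Ud4 i t : (0 < i <= 12)%N -> x i t \in Ud4 x.
Proof. by move/Xroot_sub_Ud4/subsetP; apply; apply: mem_Xroot. Qed.

Lemma Xprod_sub_Ud4 s : sorted_roots s -> Xprod x s \subset Ud4 x.
Proof.
by move=> sorted_s; apply: Xprod_subG => n /(sorted_roots_range sorted_s)/Xroot_sub_Ud4.
Qed.

Lemma card_Ud4 : #|Ud4 x| = (#|F| ^ 12)%N.
Proof.
have -> : Ud4 x = d4prod x @: setT.
  apply/eqP; rewrite eqEsubset; apply/andP; split.
    by case: Rel => _ _ _ U_d4prod; apply/subsetP => g /U_d4prod[d ->]; apply: imset_f.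
  apply/subsetP => _ /imsetP[d _ ->]; apply: group_prod => i _.
  by apply: (subsetP (Xroot_sub_Ud4 _)) (mem_Xroot _ _); rewrite /= ltn_ord.
by rewrite card_imset ?cardsT ?card_ffun ?card_ord //; apply: d4prod_inj.
Qed.

Lemma Hhook_normal : Hhook x <| Ud4 x.
Proof.
rewrite /normal Xprod_sub_Ud4 // gen_subG; apply/bigcupsP => i _.
apply/subsetP => _ /imsetP[t _ ->]; apply: x_norm_Xprod group_Hhook _ _ _ => //.
  by rewrite /= ltn_ord.
have : all (fun i => all (comm_closed hook_roots i) hook_roots) (iota 1 12) by [].
by move/allP; apply; rewrite mem_iota /= ltnS ltn_ord.
Qed.

Lemma Xroot12_central : Xroot x 12 \subset 'C(Ud4 x).
Proof.
rewrite centsC gen_subG; apply/bigcupsP => i _.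
apply/centsP => _ /imsetP[t _ ->] _ /imsetP[u _ ->]; apply: commute_x => //.
  by rewrite /= ltn_ord.
have : all (fun i => comm_closed [::] i 12) (iota 1 12) by [].
by move/allP; apply; rewrite mem_iota /= ltnS ltn_ord.
Qed.

Lemma commg_hook_Xroot12 m n t u : m \in hook_roots -> n \in hook_roots ->
  [~ x m t, x n u] \in Xroot x 12.
Proof.
move=> m_hook n_hook; have hook_r : {in hook_roots, forall n, 0 < n <= 12}%N by apply/allP.
have hook_closed : all (fun n => all (comm_closed [:: 12] n) hook_roots) hook_roots by [].
rewrite -Xprod1 commg_x_mem ?hook_r //; first by apply/allP.
by have /allP := allP hook_closed _ m_hook; apply.
Qed.

Lemma der1_Hhook : (Hhook x)^`(1) \subset Xroot x 12.
Proof.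
pose A := \bigcup_(i < 12 | i.+1 \in hook_roots) Xroot x i.+1.
have hook_r : {in hook_roots, forall n, 0 < n <= 12}%N by apply/allP.
have sHA : Hhook x \subset <<A>>.
  apply: Xprod_subG => n n_hook; have /andP[n0 n12] := hook_r n n_hook.
  have n_ord : (n.-1 < 12)%N by rewrite prednK.
  by apply: sub_gen; apply: (bigcup_max (Ordinal n_ord)); rewrite /= prednK.
have nZA : A \subset 'N(Xroot x 12).
  apply: cents_norm; rewrite centsC (subset_trans Xroot12_central) // centS //.
  by apply/bigcupsP => i /hook_r/Xroot_sub_Ud4.
apply: subset_trans (dergS 1 (G := Group group_Hhook) sHA) _.
pose Z := Group (Xroot_group (isT : 0 < 12 <= 12)%N).
apply: (der1_min (H := Z)); first by rewrite gen_subG.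
rewrite quotient_gen // abelian_gen; apply: quotient_cents2r.
rewrite (gen_subG _ Z); apply/subsetP => _ /imset2P[a b aA bA ->].
case/bigcupP: aA bA => i i_hook /imsetP[t _ ->] /bigcupP[j j_hook /imsetP[u _ ->]].
exact: commg_hook_Xroot12.
Qed.

Definition x124 (v : 'rV[F]_3) : gT :=
  x 1 (v ord0 ord0) * x 2 (v ord0 (inord 1)) * x 4 (v ord0 (inord 2)).

Lemma x124M : {in [set: 'rV[F]_3] &, {morph x124 : v w / (v * w)%g >-> v * w}}.
Proof.
move=> v w _ _; rewrite /x124 !mxE -!mulx //.
have c12 t u : commute (x 1 t) (x 2 u) by apply: commute_x.
have c14 t u : commute (x 1 t) (x 4 u) by apply: commute_x.
have c24 t u : commute (x 2 t) (x 4 u) by apply: commute_x.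
rewrite -!mulgA; congr (_ * _).
set a := x 1 _; set b := x 2 _; set b' := x 2 _; set c := x 4 _; set c' := x 4 _.
have e1 : c * (a * (b' * c')) = a * (c * (b' * c')) by rewrite mulgA -c14 -mulgA.
have e2 : b * (a * (c * (b' * c'))) = a * (b * (c * (b' * c'))) by rewrite mulgA -c12 -mulgA.
by rewrite e1 e2 (mulgA c) -c24 -mulgA.
Qed.

Lemma x124_Hhook v : x124 v \in Hhook x -> v = 0%R.
Proof.
case/(mem_XprodP (sorted_roots_uniq (erefl : sorted_roots hook_roots))) => f.
pose c n := if n == 1%N then v ord0 ord0
            else if n == 2%N then v ord0 (inord 1) else v ord0 (inord 2).
have -> : x124 v = \prod_(n <- [:: 1; 2; 4]%N) x n (c n).
  by rewrite !big_cons big_nil mulg1 mulgA.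
move/(prod_x_inj (erefl : sorted_roots [:: 1; 2; 4]%N) (erefl : sorted_roots hook_roots)).
move=> eq_c.
apply/rowP => j; rewrite mxE; have := eq_c 1%N; have := eq_c 2%N; have := eq_c 4%N.
rewrite /c /= => v2 v1 v0; have -> : (0%R : 'I_1) = ord0 by apply: val_inj.
case: j => [[|[|[|j]]] //= lt_j3]; first by rewrite -v0; congr (v _ _); apply: val_inj.
  by rewrite -v1; congr (v _ _); apply: val_inj; rewrite /= inordK.
by rewrite -v2; congr (v _ _); apply: val_inj; rewrite /= inordK.
Qed.

Lemma quotient_Ud4_Hhook_isog : (Ud4 x / Hhook x)%g \isog [set: 'rV[F]_3].
Proof.
rewrite isog_sym; apply/isogP; have nHU := normal_norm Hhook_normal.
have x124_U v : x124 v \in Ud4 x.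
  by rewrite /x124 !groupM ?x_in_Ud4.
pose f v := coset (Hhook x) (x124 v).
have fM : {in setT &, {morph f : v w / v * w}}.
  by move=> v w _ _; rewrite /f x124M ?inE // morphM ?(subsetP nHU).
pose fm := Morphism fM.
have inj_f : 'injm fm.
  apply/subsetP => v /mker fv1; rewrite inE; apply/eqP/x124_Hhook.
  by apply: (coset_idr (H := Group group_Hhook)) => //; apply: (subsetP nHU).
exists fm => //; apply/eqP; rewrite eqEcard; apply/andP; split.
  rewrite morphimEdom; apply/subsetP => _ /imsetP[v _ ->].
  exact: (@mem_quotient _ (Group group_Hhook)).
rewrite card_injm // cardsT card_mx (@card_quotient _ (Group group_Hhook)) //.
rewrite -divgS ?(normal_sub Hhook_normal) //.
by rewrite card_Ud4 card_Hhook (_ : 12 = 3 + 9)%N // expnD mulnK // expn_gt0 (cardD1 0%R).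
Qed.

(* [hook_partner n] is the root completing [alpha_n] to [alpha_12]. *)
Definition hook_partner (n : nat) : nat :=
  match n with
  | 3 => 11 | 5 => 10 | 6 => 9 | 7 => 8 | 8 => 7 | 9 => 6 | 10 => 5 | 11 => 3 | _ => n
  end.

Definition hook_sign (n : nat) : F := if n \in [:: 3; 5; 6; 8]%N then (-1)%R else 1%R.

Lemma hook_partner_hook n : n \in hook_core -> hook_partner n \in hook_roots.
Proof. by move: n; apply/allP. Qed.

Lemma commg_hook_partner n f t : n \in hook_core ->
  [~ \prod_(m <- hook_roots) x m (f m), x (hook_partner n) t] =
    x 12 (hook_sign n * (f n * t))%R.
Proof.
move=> n_core; have hook_r : {in hook_roots, forall n, 0 < n <= 12}%N by apply/allP.
rewrite (commg_prodl_central (G := [group of Ud4 x])); last first.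
  move=> m m_hook; rewrite x_in_Ud4 ?hook_r //; split=> //.
  by apply: (subsetP Xroot12_central); rewrite commg_hook_Xroot12 ?hook_partner_hook.
move: n_core; rewrite /hook_core !inE.
repeat case/orP=> [/eqP->|]; try move/eqP->.
all: rewrite !big_cons big_nil !commg_x //= /root_comm /= ?invg1 ?mulg1 ?mul1g ?invx //.
all: by congr (x 12 _); rewrite /hook_sign /=; ring.
Qed.

Lemma hook_conj h e : h \in Hhook x -> h \notin Xroot x 12 ->
  exists2 g, g \in Hhook x & h ^ g = h * x 12 e.
Proof.
case/(mem_XprodP (sorted_roots_uniq (erefl : sorted_roots hook_roots))) => f -> h_notZ.
have [n n_core fn0] : exists2 n, n \in hook_core & f n != 0%R.
  apply/hasP; apply: contraR h_notZ => /hasPn f0.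
  rewrite (_ : hook_roots = rcons hook_core 12) // big_rcons.
  rewrite big1_seq /= ?mul1g ?mem_Xroot // => m m_core.
  by rewrite (eqP (negPn (f0 m m_core))) x0 //; move: m m_core; apply/allP.
have sign_neq0 : hook_sign n != 0%R.
  by rewrite /hook_sign; case: ifP; rewrite ?oppr_eq0 oner_eq0.
exists (x (hook_partner n) (e / (hook_sign n * f n))%R).
  by apply: x_mem_Xprod (hook_partner_hook n_core); apply/allP.
by rewrite conjg_mulR commg_hook_partner // mulrA mulrC divfK ?mulf_neq0.
Qed.
End RootSubgroups.

Section HookCharacters.
Local Open Scope ring_scope.
Variables (F : finFieldType) (gT : finGroupType) (x : nat -> F -> gT).
Variables (phi : F -> algC) (lam : F -> 'CF(<<Vd4 x>>%G)).
Hypotheses (Rel : D4_relations x) (phiP : nontriv_add_char phi).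
Hypothesis lamP : forall s : F, s != 0 ->
  lam s \is a linear_char /\ (forall d : F, lam s (x 12%N d) = phi (s * d)).

Local Notation q := #|F|.
Local Notation H := (<<Hhook x>>%G).
Local Notation U := (<<Ud4 x>>%G).
Local Notation V := (<<Vd4 x>>%G).

Definition hook_char (s : F) : 'CF(H) := 'Res[H] ('Ind[U] (lam s)).

Lemma gen_Hhook : <<Hhook x>>%g = Hhook x.
Proof. exact: (genGid (Group (group_Hhook Rel))). Qed.

Lemma gen_Vd4 : <<Vd4 x>>%g = Vd4 x.
Proof. exact: (genGid (Group (group_Vd4 Rel))). Qed.

Lemma q_gt1 : (1 < q)%N.
Proof. by rewrite (cardD1 0) (cardD1 1) !inE oner_neq0. Qed.

Lemma V_sub_U : V \subset U.
Proof. by rewrite /= gen_Vd4 genGid Xprod_sub_Ud4. Qed.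

Lemma H_sub_U : H \subset U.
Proof. by rewrite /= gen_Hhook genGid Xprod_sub_Ud4. Qed.

Lemma index_V : #|U : V|%g = (q ^ 4)%N.
Proof.
rewrite -divgS ?V_sub_U //= gen_Vd4 genGid card_Ud4 // card_Vd4 //.
by rewrite (_ : 12 = 4 + 8)%N // expnD mulnK // expn_gt0 ltnW ?q_gt1.
Qed.

Lemma x12_in_V d : (x 12 d \in V)%g.
Proof. by rewrite /= gen_Vd4 x_mem_Xprod //; apply/allP. Qed.

Lemma x12_central d : (x 12 d \in 'C(U))%g.
Proof. by rewrite /= genGid (subsetP (Xroot12_central Rel)) ?mem_Xroot. Qed.

Lemma hook_charE s h : (h \in H)%g -> hook_char s h = 'Ind[U] (lam s) h.
Proof. by move=> hH; rewrite cfResE ?H_sub_U. Qed.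

Lemma Ind_lam_mul_x12 s g d : s != 0 ->
  'Ind[U] (lam s) (g * x 12 d)%g = phi (s * d) * 'Ind[U] (lam s) g.
Proof.
move=> s0; have [lin_lam lam_x12] := lamP s0.
by rewrite cfInd_mul_central ?V_sub_U ?x12_in_V ?x12_central ?lam_x12.
Qed.

Lemma hook_char1 s : s != 0 -> hook_char s 1%g = (q ^ 4)%N%:R.
Proof.
move=> s0; have [lin_lam _] := lamP s0.
rewrite hook_charE ?group1 // (cfInd1 (lam s) V_sub_U).
by rewrite index_V lin_char1 ?mulr1.
Qed.

Lemma hook_char_x12 s d : s != 0 -> hook_char s (x 12 d) = phi (s * d) * (q ^ 4)%N%:R.
Proof.
move=> s0; rewrite hook_charE; last by rewrite /= gen_Hhook x_mem_Xprod //; apply/allP.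
by rewrite -[x 12 d]mul1g Ind_lam_mul_x12 // -hook_charE ?group1 // hook_char1.
Qed.

Lemma hook_char_support s : s != 0 -> hook_char s \in 'CF(H, Xroot x 12).
Proof.
move=> s0; have [lin_lam lam_x12] := lamP s0; have [_ [a0 phi_a0]] := phiP.
apply/cfun_onP => h h_notZ; have [hH|] := boolP (h \in H); last exact: cfun0.
rewrite hook_charE //; rewrite /= gen_Hhook in hH.
have [g gH hg] := hook_conj Rel (a0 / s) hH h_notZ.
have gU : (g \in U)%g by rewrite (subsetP H_sub_U) //= gen_Hhook.
apply: (cfInd_eq0_conj V_sub_U lin_lam gU (x12_in_V _) (x12_central _) hg).
by rewrite lam_x12 mulrC divfK.
Qed.

Lemma hook_char_irr s : s != 0 -> hook_char s \in irr H.
Proof.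
move=> s0; have [lin_lam lam_x12] := lamP s0.
apply: (flat_char_irr _ (hook_char_support s0)).
- by rewrite cfRes_char ?cfInd_char ?lin_charW.
- move=> _ /imsetP[d _ ->]; rewrite hook_char_x12 // hook_char1 // normrM normr_nat.
  by rewrite -lam_x12 normC_lin_char ?x12_in_V ?mul1r.
rewrite hook_char1 // card_Xroot // /= gen_Hhook card_Hhook //.
by rewrite -natrX -natrM -expnM -expnS.
Qed.

Lemma hook_char_nonlinear s : s != 0 -> ~~ (hook_char s \is a linear_char).
Proof.
move=> s0; apply/negP => /lin_char1; rewrite hook_char1 // => /eqP.
by rewrite pnatr_eq1 -(exp1n 4) eqn_exp2r // gtn_eqF ?q_gt1.
Qed.

Lemma hook_char_inj : {in predC1 0 &, injective hook_char}.
Proof.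
move=> s s' /[!inE] s0 s'0 eq_mu; apply/eqP; apply: contraT => neq_ss'.
have [phiM [a0 phi_a0]] := phiP; have [lin_lam' lam'_x12] := lamP s'0.
have phi_eq d : phi (s * d) = phi (s' * d).
  have /(congr1 (fun chi : 'CF(H) => chi (x 12 d))) := eq_mu.
  rewrite !hook_char_x12 // => /mulIf; apply.
  by rewrite pnatr_eq0 expn_eq0 gtn_eqF // ltnW ?q_gt1.
pose d := a0 / (s - s'); have ss'0 : s - s' != 0 by rewrite subr_eq0.
have : phi (s' * d) * phi a0 = phi (s' * d).
  rewrite -phiM -phi_eq; congr phi; apply/eqP; rewrite addrC eq_sym -subr_eq -mulrBl.
  by rewrite /d mulrC divfK.
have phi_s'd_neq0 : phi (s' * d) != 0 by rewrite -lam'_x12 lin_char_neq0 ?x12_in_V.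
rewrite -{2}[phi (s' * d)]mulr1 => /(mulfI phi_s'd_neq0) phi_a0_eq1.
by rewrite phi_a0_eq1 eqxx in phi_a0.
Qed.

Lemma index_der1_H : (q ^ 8 <= #|H : H^`(1)|%g)%N.
Proof.
have q_gt0 : (0 < q)%N by rewrite ltnW ?q_gt1.
have cardH' : (#|H^`(1)%g| <= q)%N.
  rewrite -(card_Xroot Rel (isT : 0 < 12 <= 12)%N) subset_leq_card //=.
  by rewrite gen_Hhook der1_Hhook.
have cardH : #|H| = (q ^ 9)%N by rewrite /= gen_Hhook card_Hhook.
rewrite -(leq_pmul2l q_gt0) -expnS -cardH -(Lagrange (der_sub 1 H)).
by rewrite leq_mul2r cardH' orbT.
Qed.

Lemma nonlinear_irr_hook_char chi : chi \in irr H -> ~~ (chi \is a linear_char) ->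
  exists2 s : F, s != 0 & chi = hook_char s.
Proof.
move=> chi_irr chi_nl.
have [||s /[!inE] s0 ->] := nonlinear_irr_family _ hook_char_inj _ chi_irr chi_nl.
- by move=> s /[!inE] s0; split; [apply: hook_char_irr | apply: hook_char_nonlinear].
- rewrite (eq_bigr (fun=> ((q ^ 4)%N%:R) ^+ 2)) => [|s /[!inE] s0]; last by rewrite hook_char1.
  rewrite sumr_const cardC1 -natrX -mulrnA -natrD ler_nat -expnM (_ : 4 * 2 = 8)%N //.
  have -> : #|H| = (q ^ 8 + q ^ 8 * q.-1)%N.
    by rewrite /= gen_Hhook card_Hhook // -mulnS (prednK (ltnW q_gt1)) expnSr.
  by rewrite leq_add2r index_der1_H.
by exists s.
Qed.

Lemma Ind_lam_irr s : s != 0 -> 'Ind[U] (lam s) \in irr U.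
Proof.
move=> s0; have [lin_lam _] := lamP s0.
by apply: (cfRes_irr_irr (H := H)); rewrite ?cfInd_char ?lin_charW ?hook_char_irr.
Qed.

End HookCharacters.

Local Open Scope ring_scope.

Theorem mainTheorem6 (F : finFieldType) (gT : finGroupType) (x : nat -> F -> gT)
    (phi : F -> algC)
    (lam : F -> 'CF(<<Vd4 x>>%G)) :
  D4_relations x ->
  nontriv_add_char phi ->
  (forall s : F, s != 0 ->
     lam s \is a linear_char /\ (forall d : F, lam s (x 12%N d) = phi (s * d))) ->
  let U := Ud4 x in
  let H := Hhook x in
  let mu := fun s : F => 'Res[<<H>>%G] ('Ind[<<U>>%G] (lam s)) in
  [/\ group_set H /\ (H <| U)%g,
      (U / H)%g \isog [set: 'rV[F]_3],
      (forall s : F, s != 0 -> mu s \in irr <<H>>%G /\ mu s 1%g = (#|F| ^ 4)%N%:R),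
      {in predC1 0 &, injective mu} &
      ((forall chi, chi \in irr <<H>>%G ->
          ~~ (chi \is a linear_char) <-> exists2 s : F, s != 0 & chi = mu s) /\
       (forall chi, chi \in irr <<H>>%G -> ~~ (chi \is a linear_char) ->
          exists2 psi, psi \in irr <<U>>%G & 'Res[<<H>>%G] psi = chi))].
Proof.
move=> Rel phiP lamP U H mu.
have hook_irr := hook_char_irr Rel phiP lamP.
have hook_nl := hook_char_nonlinear Rel lamP.
have hook1 := hook_char1 Rel lamP.
have classify := nonlinear_irr_hook_char Rel phiP lamP.
split.
- exact: (conj (group_Hhook Rel) (Hhook_normal Rel)).
- exact: quotient_Ud4_Hhook_isog Rel.
- by move=> s s0; split; [apply: hook_irr | apply: hook1].
- exact: hook_char_inj Rel phiP lamP.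
split=> chi chi_irr; first by split=> [|[s s0 ->]]; [apply: classify | apply: hook_nl].
move=> /(classify _ chi_irr)[s s0 ->].
by exists ('Ind[<<U>>%G] (lam s)); first exact (Ind_lam_irr Rel phiP lamP s0).
Qed.
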